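(* Let $f(z)=z^3\prod_{n=1}^{\infty}(1+z/a_n)^{2p_n}$ be a transcendental entire function, where $(a_n)$ is a positive strictly increasing sequence and $p_n\in\mathbb N$. Let $g$ be the associated function defined below and let $r_0=10$, $r_{n}=g^{n}(10)$ for $n\ge1$. Suppose there exists a sequence of positive integers $(N_k)_{k\in\mathbb N}$ such that $$f^{N_1}\big((-r_2,0]\big)\subset(-r_{N_1},0]$$ and, for all $k\ge2$, $$f^{N_k}\big((-r_{N_1+\cdots+N_{k-1}+2k},0]\big)\subset(-r_{N_1+\cdots+N_k},0].$$ Then $A(f)\cap(-\infty,0]=\emptyset$.
   Context: The function $g:[0,\infty)\to[0,\infty)$ is defined by $g(r)=r^3$ for $0\le r<a_1$ and $g(r)=r^3\prod_{n:\,a_n\le r}(1+r/a_n)^{2p_n}$ for $r\ge a_1$; $g^n$ is its $n$th iterate. $f^n$ denotes the $n$th iterate of $f$, $M(r)=\max_{|z|=r}|f(z)|$ and $M^n$ its $n$th iterate. For $R>0$ with $M(r)>r$ for $r\ge R$, $A_R(f)=\{z:|f^n(z)|\ge M^n(R)\text{ for all }n\in\mathbb N\}$ and $A(f)=\bigcup_{n\in\mathbb N}f^{-n}(A_R(f))$ (independent of the choice of such $R$). *)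

From Stdlib Require Export Reals.
Open Scope R_scope.

Definition Cx : Type := (R * R)%type.
Definition Cre (z : Cx) : R := fst z.
Definition Cim (z : Cx) : R := snd z.
Definition RtoC (x : R) : Cx := (x, 0).
Definition C1 : Cx := (1, 0).
Definition Cadd (z w : Cx) : Cx := (fst z + fst w, snd z + snd w).
Definition Csub (z w : Cx) : Cx := (fst z - fst w, snd z - snd w).
Definition Cmul (z w : Cx) : Cx :=
  (fst z * fst w - snd z * snd w, fst z * snd w + snd z * fst w).
Definition Cdivr (z : Cx) (a : R) : Cx := (fst z / a, snd z / a).
Fixpoint Cpow (z : Cx) (k : nat) : Cx :=
  match k with O => C1 | S k => Cmul (Cpow z k) z end.
Definition Cnorm (z : Cx) : R := sqrt (fst z * fst z + snd z * snd z).

Definition Ccv (u : nat -> Cx) (l : Cx) : Prop :=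
  forall eps, 0 < eps -> exists N, forall n, (N <= n)%nat -> Cnorm (Csub (u n) l) < eps.

Fixpoint Cprod (N : nat) (F : nat -> Cx) : Cx :=
  match N with O => C1 | S N => Cmul (Cprod N F) (F N) end.
Fixpoint Rprod (N : nat) (F : nat -> R) : R :=
  match N with O => 1 | S N => Rprod N F * F N end.

Fixpoint iterf {A : Type} (n : nat) (h : A -> A) (x : A) : A :=
  match n with O => x | S n => h (iterf n h x) end.

(* partial products of f(z) = z^3 prod_{n>=1} (1 + z/a_n)^{2 p_n}
   (sequences indexed from 0: a 0 = a_1, p 0 = p_1) *)
Definition fpart (a : nat -> R) (p : nat -> nat) (N : nat) (z : Cx) : Cx :=
  Cmul (Cpow z 3) (Cprod N (fun n => Cpow (Cadd C1 (Cdivr z (a n))) (2 * p n))).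

(* partial products for g: for r >= a_1,
   g(r) = r^3 prod_{n : a_n <= r} (1 + r/a_n)^{2 p_n}; g(r) = r^3 for r < a_1 *)
Definition gpart (a : nat -> R) (p : nat -> nat) (N : nat) (r : R) : R :=
  if Rlt_dec r (a 0%nat) then r ^ 3
  else r ^ 3 * Rprod N (fun n => if Rle_dec (a n) r then (1 + r / a n) ^ (2 * p n) else 1).

Definition is_max_modulus (f : Cx -> Cx) (M : R -> R) : Prop :=
  forall r, 0 <= r ->
    (exists z, Cnorm z = r /\ Cnorm (f z) = M r) /\
    (forall z, Cnorm z = r -> Cnorm (f z) <= M r).

Definition in_AR (f : Cx -> Cx) (M : R -> R) (R0 : R) (z : Cx) : Prop :=
  forall n : nat, (1 <= n)%nat -> Cnorm (iterf n f z) >= iterf n M R0.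

Definition in_A (f : Cx -> Cx) (M : R -> R) (R0 : R) (z : Cx) : Prop :=
  exists m : nat, (1 <= m)%nat /\ in_AR f M R0 (iterf m f z).

(* N_1 + ... + N_k  (sequence N indexed from 1) *)
Fixpoint Nsum (N : nat -> nat) (k : nat) : nat :=
  match k with O => O | S k => (Nsum N k + N (S k))%nat end.

Definition maps_into (f : Cx -> Cx) (m : nat) (s t : R) : Prop :=
  forall x, -s < x <= 0 ->
    Cim (iterf m f (RtoC x)) = 0 /\ - t < Cre (iterf m f (RtoC x)) <= 0.

From Pilot Require Import Defs.
From Stdlib Require Import Reals Lra Lia.
From Coquelicot Require Complex.
Open Scope R_scope.

(* On the negative axis every factor satisfies |1 - r/a_n| <= 1 + r/a_n
   when a_n <= r and <= 1 otherwise, so |f(-r)| <= g(r): f maps (-oo,0] into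
   itself and moves points outwards at most at the speed of g.  Together with
   the hypotheses on the blocks of N_k iterates this shows that the real orbit
   of x <= 0 falls below every shifted copy of the scale r_n = g^n(10)
   infinitely often.  On the positive axis the maximum modulus is attained,
   M(r) = f(r) >= g(r), so M^n(R) eventually dominates a shifted copy of r_n;
   a point of A(f) would therefore have an orbit eventually above such a copy. *)

(* [Cnorm] is Coquelicot's modulus [Cmod], and [Cadd], [Cmul] are literally its
   [Cplus], [Cmult]; the basic properties of the modulus are imported from there. *)
Lemma Cnorm_Cmod (z : Cx) : Cnorm z = Complex.Cmod z.
Proof. unfold Cnorm, Complex.Cmod; f_equal; ring. Qed.

Lemma Cnorm_nonneg (z : Cx) : 0 <= Cnorm z.
Proof. apply sqrt_pos. Qed.

Lemma Cnorm_RtoC (y : R) : Cnorm (RtoC y) = Rabs y.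
Proof. rewrite Cnorm_Cmod; apply Complex.Cmod_R. Qed.

(* [Defs.C1] is the complex unit; the bare name is shadowed by Stdlib's [C1]. *)
Lemma Cnorm_C1 : Cnorm Defs.C1 = 1.
Proof. rewrite Cnorm_Cmod; apply Complex.Cmod_1. Qed.

Lemma Cnorm_add (z w : Cx) : Cnorm (Cadd z w) <= Cnorm z + Cnorm w.
Proof. rewrite !Cnorm_Cmod; apply Complex.Cmod_triangle. Qed.

Lemma Cnorm_mul (z w : Cx) : Cnorm (Cmul z w) = Cnorm z * Cnorm w.
Proof. rewrite !Cnorm_Cmod; apply Complex.Cmod_mult. Qed.

Lemma Cnorm_components (z : Cx) : Rabs (fst z) <= Cnorm z /\ Rabs (snd z) <= Cnorm z.
Proof.
  pose proof (Complex.Rmax_Cmod z) as H; rewrite <- Cnorm_Cmod in H.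
  split; eapply Rle_trans; try exact H; [apply Rmax_l | apply Rmax_r].
Qed.

Lemma Cnorm_pow (z : Cx) (k : nat) : Cnorm (Cpow z k) = Cnorm z ^ k.
Proof. induction k as [|k IH]; simpl; [apply Cnorm_C1 | rewrite Cnorm_mul, IH; ring]. Qed.

Lemma Cnorm_prod (K : nat) (F : nat -> Cx) :
  Cnorm (Cprod K F) = Rprod K (fun n => Cnorm (F n)).
Proof. induction K as [|K IH]; simpl; [apply Cnorm_C1 | rewrite Cnorm_mul, IH; ring]. Qed.

Lemma Cnorm_divr (z : Cx) (b : R) : 0 < b -> Cnorm (Cdivr z b) = Cnorm z / b.
Proof.
  intro hb. replace (Cdivr z b) with (Cmul z (RtoC (/ b)))
    by (unfold Cmul, Cdivr, RtoC; simpl; f_equal; unfold Rdiv; ring).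
  rewrite Cnorm_mul, Cnorm_RtoC, Rabs_pos_eq by (left; apply Rinv_0_lt_compat, hb).
  reflexivity.
Qed.

Lemma Cnorm_sub_ge (z w : Cx) : Rabs (Cnorm z - Cnorm w) <= Cnorm (Csub z w).
Proof.
  assert (Hz : Cnorm z <= Cnorm w + Cnorm (Csub z w)).
  { replace z with (Cadd w (Csub z w)) at 1
      by (unfold Cadd, Csub; simpl; rewrite (surjective_pairing z); simpl; f_equal; ring).
    apply Cnorm_add. }
  assert (Hw : Cnorm w <= Cnorm z + Cnorm (Csub z w)).
  { replace (Cnorm (Csub z w)) with (Cnorm (Csub w z))
      by (unfold Cnorm, Csub; simpl; f_equal; ring).
    replace w with (Cadd z (Csub w z)) at 1
      by (unfold Cadd, Csub; simpl; rewrite (surjective_pairing w); simpl; f_equal; ring).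
    apply Cnorm_add. }
  apply Rabs_le; lra.
Qed.

Lemma Ccv_norm (u : nat -> Cx) (l : Cx) : Ccv u l -> Un_cv (fun K => Cnorm (u K)) (Cnorm l).
Proof.
  intros H eps heps. destruct (H eps heps) as [K0 HK0]. exists K0. intros n hn.
  eapply Rle_lt_trans; [apply Cnorm_sub_ge | apply HK0; lia].
Qed.

Lemma Ccv_real (y : nat -> R) (l : Cx) :
  Ccv (fun K => RtoC (y K)) l -> snd l = 0 /\ Un_cv y (fst l).
Proof.
  intro H. split.
  - destruct (Req_dec (snd l) 0) as [e|ne]; [exact e | exfalso].
    destruct (H _ (Rabs_pos_lt _ ne)) as [K0 HK0].
    specialize (HK0 K0 (le_n K0)); cbv beta in HK0.
    destruct (Cnorm_components (Csub (RtoC (y K0)) l)) as [_ Him].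
    replace (snd (Csub (RtoC (y K0)) l)) with (- snd l) in Him
      by (unfold Csub, RtoC; simpl; ring).
    rewrite Rabs_Ropp in Him. lra.
  - intros eps heps. destruct (H eps heps) as [K0 HK0]. exists K0. intros n hn.
    specialize (HK0 n hn); cbv beta in HK0.
    destruct (Cnorm_components (Csub (RtoC (y n)) l)) as [Hre _].
    replace (fst (Csub (RtoC (y n)) l)) with (y n - fst l) in Hre
      by (unfold Csub, RtoC; simpl; ring).
    unfold R_dist. lra.
Qed.

Lemma RtoC_mul (u v : R) : Cmul (RtoC u) (RtoC v) = RtoC (u * v).
Proof. unfold Cmul, RtoC; simpl; f_equal; ring. Qed.

Lemma RtoC_pow (y : R) (k : nat) : Cpow (RtoC y) k = RtoC (y ^ k).
Proof.
  induction k as [|k IH]; simpl; [reflexivity|].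
  rewrite IH, RtoC_mul, Rmult_comm; reflexivity.
Qed.

Lemma Cprod_ext (K : nat) (F G : nat -> Cx) : (forall n, F n = G n) -> Cprod K F = Cprod K G.
Proof. intro H; induction K as [|K IH]; simpl; [reflexivity | rewrite IH, H; reflexivity]. Qed.

Lemma RtoC_prod (K : nat) (h : nat -> R) : Cprod K (fun n => RtoC (h n)) = RtoC (Rprod K h).
Proof. induction K as [|K IH]; simpl; [reflexivity | rewrite IH, RtoC_mul; reflexivity]. Qed.

Lemma Rprod_le (K : nat) (F G : nat -> R) :
  (forall n, 0 <= F n <= G n) -> 0 <= Rprod K F <= Rprod K G.
Proof.
  intro H; induction K as [|K IH]; simpl; [lra|].
  destruct (H K), IH. split; [apply Rmult_le_pos | apply Rmult_le_compat]; lra.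
Qed.

Lemma Rprod_ge1 (K : nat) (F : nat -> R) : (forall n, 1 <= F n) -> 1 <= Rprod K F.
Proof. intro H; induction K as [|K IH]; simpl; [lra | specialize (H K); nra]. Qed.

Lemma Rprod_one (K : nat) (F : nat -> R) : (forall n, F n = 1) -> Rprod K F = 1.
Proof. intro H; induction K as [|K IH]; simpl; [reflexivity | rewrite IH, H; ring]. Qed.

Lemma Rprod_ext (K : nat) (F G : nat -> R) : (forall n, F n = G n) -> Rprod K F = Rprod K G.
Proof. intro H; induction K as [|K IH]; simpl; [reflexivity | rewrite IH, H; reflexivity]. Qed.

Definition gfactor (b r : R) (k : nat) : R := if Rle_dec b r then (1 + r / b) ^ k else 1.

Section Factors.
Variables (b : R) (k : nat).
Hypothesis hb : 0 < b.

Lemma ratio_nonneg (r : R) : 0 <= r -> 0 <= r / b.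
Proof. intro hr; apply Rmult_le_pos; [lra | left; apply Rinv_0_lt_compat, hb]. Qed.

Lemma shifted_power_mono (s r : R) : 0 <= s <= r -> (1 + s / b) ^ k <= (1 + r / b) ^ k.
Proof.
  intros [hs hsr]. apply pow_incr. pose proof (ratio_nonneg s hs).
  split; [lra|]. apply Rplus_le_compat_l, Rmult_le_compat_r; [|lra].
  left; apply Rinv_0_lt_compat, hb.
Qed.

Lemma gfactor_ge1 (r : R) : 0 <= r -> 1 <= gfactor b r k.
Proof.
  intro hr; unfold gfactor; destruct (Rle_dec b r); [|lra].
  apply pow_R1_Rle; pose proof (ratio_nonneg r hr); lra.
Qed.

Lemma gfactor_le (r : R) : 0 <= r -> gfactor b r k <= (1 + r / b) ^ k.
Proof.
  intro hr; unfold gfactor; destruct (Rle_dec b r); [lra|].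
  apply pow_R1_Rle; pose proof (ratio_nonneg r hr); lra.
Qed.

Lemma gfactor_mono (s r : R) : 0 <= s <= r -> gfactor b s k <= gfactor b r k.
Proof.
  intros [hs hsr]. pose proof (gfactor_ge1 r ltac:(lra)).
  unfold gfactor at 1; destruct (Rle_dec b s); [|lra].
  unfold gfactor; destruct (Rle_dec b r); [apply shifted_power_mono; lra | lra].
Qed.

(* The factor of f at -r is dominated by the factor of g at r:
   (1 - t)^2 <= (1 + t)^2 always, and (1 - t)^2 <= 1 when t < 1. *)
Lemma neg_factor_bound (r : R) :
  0 <= r -> 0 <= (1 - r / b) ^ (2 * k) <= gfactor b r (2 * k).
Proof.
  intro hr. pose proof (ratio_nonneg r hr) as ht. rewrite pow_mult.
  unfold gfactor; set (t := r / b) in *.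
  split; [apply pow_le, pow2_ge_0|]. destruct (Rle_dec b r) as [hbr|hbr].
  - rewrite pow_mult. apply pow_incr. split; [apply pow2_ge_0 | simpl; nra].
  - assert (t < 1).
    { unfold t; apply (Rmult_lt_reg_r b); [exact hb|].
      unfold Rdiv; rewrite Rmult_assoc, Rinv_l; lra. }
    rewrite <- (pow1 k) at 2. apply pow_incr. split; [apply pow2_ge_0 | simpl; nra].
Qed.

End Factors.

Definition Fpart (a : nat -> R) (p : nat -> nat) (K : nat) (y : R) : R :=
  y ^ 3 * Rprod K (fun n => (1 + y / a n) ^ (2 * p n)).

Section PartialProducts.
Variables (a : nat -> R) (p : nat -> nat).
Hypothesis ha_pos : forall n, 0 < a n.
Hypothesis ha_inc : forall n, a n < a (S n).

(* Since (a_n) increases, g(r) = r^3 for r < a_1 agrees with the product formula. *)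
Lemma a_ge_first (n : nat) : a 0 <= a n.
Proof. induction n as [|n IH]; [lra | specialize (ha_inc n); lra]. Qed.

Lemma gpart_eq (K : nat) (r : R) :
  gpart a p K r = r ^ 3 * Rprod K (fun n => gfactor (a n) r (2 * p n)).
Proof.
  unfold gpart. destruct (Rlt_dec r (a 0)) as [hr|hr]; [|reflexivity].
  rewrite Rprod_one; [ring|]. intro n. unfold gfactor.
  destruct (Rle_dec (a n) r); [pose proof (a_ge_first n); lra | reflexivity].
Qed.

Lemma gpart_ge_cube (K : nat) (r : R) : 0 <= r -> r ^ 3 <= gpart a p K r.
Proof.
  intro hr. rewrite gpart_eq. pose proof (pow_le r 3 hr).
  assert (1 <= Rprod K (fun n => gfactor (a n) r (2 * p n)))
    by (apply Rprod_ge1; intro n; apply gfactor_ge1; auto).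
  nra.
Qed.

Lemma gpart_mono (K : nat) (s r : R) : 0 <= s <= r -> gpart a p K s <= gpart a p K r.
Proof.
  intros hsr. rewrite !gpart_eq.
  assert (Hprod : 0 <= Rprod K (fun n => gfactor (a n) s (2 * p n))
                    <= Rprod K (fun n => gfactor (a n) r (2 * p n))).
  { apply Rprod_le. intro n.
    pose proof (gfactor_ge1 (a n) (2 * p n) (ha_pos n) s ltac:(lra)).
    pose proof (gfactor_mono (a n) (2 * p n) (ha_pos n) s r hsr); lra. }
  apply Rmult_le_compat; [apply pow_le; lra | lra | apply pow_incr; lra | lra].
Qed.

Lemma gpart_le_Fpart (K : nat) (r : R) : 0 <= r -> gpart a p K r <= Fpart a p K r.
Proof.
  intro hr. rewrite gpart_eq. unfold Fpart.
  apply Rmult_le_compat_l; [apply pow_le; lra|]. apply Rprod_le. intro n.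
  pose proof (gfactor_ge1 (a n) (2 * p n) (ha_pos n) r hr).
  pose proof (gfactor_le (a n) (2 * p n) (ha_pos n) r hr); lra.
Qed.

Lemma Fpart_neg_bound (K : nat) (r : R) :
  0 <= r -> 0 <= - Fpart a p K (- r) <= gpart a p K r.
Proof.
  intro hr. rewrite gpart_eq. unfold Fpart.
  rewrite (Rprod_ext K _ (fun n => (1 - r / a n) ^ (2 * p n)))
    by (intro n; f_equal; unfold Rdiv; ring).
  assert (Hprod : 0 <= Rprod K (fun n => (1 - r / a n) ^ (2 * p n))
                    <= Rprod K (fun n => gfactor (a n) r (2 * p n)))
    by (apply Rprod_le; intro n; apply neg_factor_bound; auto).
  pose proof (pow_le r 3 hr).
  replace (- ((- r) ^ 3 * Rprod K (fun n => (1 - r / a n) ^ (2 * p n))))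
    with (r ^ 3 * Rprod K (fun n => (1 - r / a n) ^ (2 * p n))) by ring.
  split; [apply Rmult_le_pos | apply Rmult_le_compat_l]; lra.
Qed.

(* F(r)/r is nondecreasing on the positive axis (F(r) = r^3 times factors
   nondecreasing in r), written without division. *)
Lemma Fpart_homog (K : nat) (s r : R) :
  0 <= s <= r -> r * Fpart a p K s <= s * Fpart a p K r.
Proof.
  intro hsr. unfold Fpart.
  assert (Hprod : 0 <= Rprod K (fun n => (1 + s / a n) ^ (2 * p n))
                    <= Rprod K (fun n => (1 + r / a n) ^ (2 * p n))).
  { apply Rprod_le. intro n. split; [|apply shifted_power_mono; auto].
    apply pow_le. pose proof (ratio_nonneg (a n) (ha_pos n) s ltac:(lra)); lra. }
  assert (Hcube : 0 <= r * s ^ 3 <= s * r ^ 3).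
  { pose proof (pow_le s 3 ltac:(lra)). assert (0 <= s * r) by nra.
    assert (s * s <= r * r) by nra.
    split; [apply Rmult_le_pos; lra | simpl; nra]. }
  replace (r * (s ^ 3 * _)) with (r * s ^ 3 * Rprod K (fun n => (1 + s / a n) ^ (2 * p n)))
    by ring.
  replace (s * (r ^ 3 * _)) with (s * r ^ 3 * Rprod K (fun n => (1 + r / a n) ^ (2 * p n)))
    by ring.
  apply Rmult_le_compat; lra.
Qed.

Lemma fpart_RtoC (K : nat) (y : R) : fpart a p K (RtoC y) = RtoC (Fpart a p K y).
Proof.
  unfold fpart, Fpart. rewrite RtoC_pow, <- RtoC_mul, <- RtoC_prod. f_equal.
  apply Cprod_ext. intro n. rewrite <- RtoC_pow. f_equal.
  unfold Cadd, Defs.C1, Cdivr, RtoC; simpl. f_equal; unfold Rdiv; ring.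
Qed.

(* ... and |f_K(z)| <= f_K(|z|), since every coefficient is positive. *)
Lemma fpart_norm (K : nat) (z : Cx) : Cnorm (fpart a p K z) <= Fpart a p K (Cnorm z).
Proof.
  unfold fpart, Fpart. rewrite Cnorm_mul, Cnorm_pow, Cnorm_prod.
  apply Rmult_le_compat_l; [apply pow_le, Cnorm_nonneg|].
  apply Rprod_le. intro n. rewrite Cnorm_pow.
  split; [apply pow_le, Cnorm_nonneg|]. apply pow_incr.
  split; [apply Cnorm_nonneg|].
  eapply Rle_trans; [apply Cnorm_add|]. rewrite Cnorm_C1, Cnorm_divr by apply ha_pos. lra.
Qed.

End PartialProducts.

Lemma iterf_add {A : Type} (h : A -> A) (t s : nat) (y : A) :
  iterf (t + s) h y = iterf t h (iterf s h y).
Proof. induction t as [|t IH]; simpl; [reflexivity | rewrite IH; reflexivity]. Qed.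

Lemma iterf_nonpos (F : R -> R) (x : R) (t : nat) :
  (forall y, y <= 0 -> F y <= 0) -> x <= 0 -> iterf t F x <= 0.
Proof. intros HF hx. induction t as [|t IH]; simpl; [exact hx | apply HF, IH]. Qed.

Lemma Un_cv_const (c : R) : Un_cv (fun _ => c) c.
Proof.
  intros eps heps. exists O. intros n _.
  unfold R_dist. rewrite Rminus_diag, Rabs_R0. lra.
Qed.

Lemma Un_cv_scal (c : R) (u : nat -> R) (l : R) :
  Un_cv u l -> Un_cv (fun n => c * u n) (c * l).
Proof. intro H. exact (CV_mult (fun _ => c) u c l (Un_cv_const c) H). Qed.

Section Limits.
Variables (a : nat -> R) (p : nat -> nat) (f : Cx -> Cx) (g M : R -> R).
Hypothesis ha_pos : forall n, 0 < a n.
Hypothesis ha_inc : forall n, a n < a (S n).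
Hypothesis hf : forall z, Ccv (fun K => fpart a p K z) (f z).
Hypothesis hg : forall r, 0 <= r -> Un_cv (fun K => gpart a p K r) (g r).
Hypothesis hM : is_max_modulus f M.

Definition freal (y : R) : R := fst (f (RtoC y)).

Lemma f_on_reals (y : R) :
  f (RtoC y) = RtoC (freal y) /\ Un_cv (fun K => Fpart a p K y) (freal y).
Proof.
  assert (Hcv : Ccv (fun K => RtoC (Fpart a p K y)) (f (RtoC y))).
  { intros eps heps. destruct (hf (RtoC y) eps heps) as [K0 HK0]. exists K0.
    intros n hn. rewrite <- fpart_RtoC. apply HK0, hn. }
  destruct (Ccv_real _ _ Hcv) as [Him Hre]. split; [|exact Hre].
  unfold freal. change (RtoC (fst (f (RtoC y)))) with (fst (f (RtoC y)), 0).
  rewrite <- Him. apply surjective_pairing.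
Qed.

Lemma iterf_RtoC (t : nat) (y : R) : iterf t f (RtoC y) = RtoC (iterf t freal y).
Proof. induction t as [|t IH]; simpl; [reflexivity | rewrite IH; apply f_on_reals]. Qed.

Lemma g_ge_cube (r : R) : 0 <= r -> r ^ 3 <= g r.
Proof.
  intro hr. apply (@Rle_cv_lim (fun _ => r ^ 3) (fun K => gpart a p K r)); auto.
  - intro K. apply gpart_ge_cube; auto.
  - apply Un_cv_const.
Qed.

Lemma g_nondecreasing (s r : R) : 0 <= s <= r -> g s <= g r.
Proof.
  intro hsr. apply (@Rle_cv_lim (fun K => gpart a p K s) (fun K => gpart a p K r));
    [intro K; apply gpart_mono | apply hg | apply hg]; auto; lra.
Qed.

Lemma freal_nonpos (y : R) : y <= 0 -> freal y <= 0 /\ - freal y <= g (- y).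
Proof.
  intro hy. pose proof (CV_opp _ _ (proj2 (f_on_reals y))) as Hcv. unfold opp_seq in Hcv.
  assert (Hb : forall K, 0 <= - Fpart a p K y <= gpart a p K (- y)).
  { intro K. pose proof (Fpart_neg_bound a p ha_pos ha_inc K (- y) ltac:(lra)) as H.
    rewrite Ropp_involutive in H. exact H. }
  split.
  - assert (0 <= - freal y); [|lra].
    apply (@Rle_cv_lim (fun _ => 0) (fun K => - Fpart a p K y)); auto.
    + intro K; apply Hb.
    + apply Un_cv_const.
  - apply (@Rle_cv_lim (fun K => - Fpart a p K y) (fun K => gpart a p K (- y))); auto.
    + intro K; apply Hb.
    + apply hg; lra.
Qed.

Lemma M_eq_freal (r : R) : 0 <= r -> M r = freal r.
Proof.
  intro hr. destruct (hM r hr) as [[z [hz hfz]] Hmax].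
  destruct (f_on_reals r) as [Hfr Hcv]. apply Rle_antisym.
  - rewrite <- hfz.
    apply (@Rle_cv_lim (fun K => Cnorm (fpart a p K z)) (fun K => Fpart a p K r)).
    + intro K. rewrite <- hz. apply fpart_norm; auto.
    + apply Ccv_norm, hf.
    + exact Hcv.
  - specialize (Hmax (RtoC r)). rewrite Hfr, !Cnorm_RtoC, Rabs_pos_eq in Hmax by lra.
    pose proof (Rle_abs (freal r)). specialize (Hmax eq_refl). lra.
Qed.

Lemma g_le_max_modulus (r : R) : 0 <= r -> g r <= M r.
Proof.
  intro hr. rewrite M_eq_freal by exact hr.
  apply (@Rle_cv_lim (fun K => gpart a p K r) (fun K => Fpart a p K r)); auto.
  - intro K. apply gpart_le_Fpart; auto.
  - apply f_on_reals.
Qed.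

Lemma max_modulus_ratio_mono (s r : R) : 0 <= s <= r -> r * M s <= s * M r.
Proof.
  intro hsr. rewrite !M_eq_freal by lra.
  apply (@Rle_cv_lim (fun K => r * Fpart a p K s) (fun K => s * Fpart a p K r)).
  - intro K. apply Fpart_homog; auto.
  - apply Un_cv_scal, f_on_reals.
  - apply Un_cv_scal, f_on_reals.
Qed.

Lemma orbit_modulus (x : R) (t : nat) :
  x <= 0 -> Cnorm (iterf t f (RtoC x)) = - iterf t freal x.
Proof.
  intro hx. rewrite iterf_RtoC, Cnorm_RtoC. apply Rabs_left1, iterf_nonpos; [|exact hx].
  intros y hy; apply freal_nonpos, hy.
Qed.

Lemma maps_into_real (m : nat) (s t : R) :
  maps_into f m s t -> forall y, - s < y <= 0 -> - t < iterf m freal y.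
Proof.
  intros H y hy. destruct (H y hy) as [_ [Hlt _]].
  rewrite iterf_RtoC in Hlt. exact Hlt.
Qed.

End Limits.

Section Scale.
Variable g : R -> R.
Hypothesis g_cube : forall r, 0 <= r -> r ^ 3 <= g r.

Definition scale (n : nat) : R := iterf n g 10.

Lemma scale_succ (n : nat) : 10 <= scale n /\ scale n + 1 <= scale (S n).
Proof.
  assert (Hstep : forall s, 10 <= s -> s + 1 <= g s).
  { intros s hs. pose proof (g_cube s ltac:(lra)). simpl in *. nra. }
  induction n as [|n [IH1 IH2]].
  - split; [unfold scale; simpl; lra | apply Hstep; unfold scale; simpl; lra].
  - split; [lra | apply Hstep; lra].
Qed.

Lemma scale_lt (i j : nat) : (i < j)%nat -> scale i < scale j.
Proof.
  induction 1 as [|j _ IH]; [|pose proof (scale_succ j)]; pose proof (scale_succ i); lra.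
Qed.

Lemma scale_le (i j : nat) : (i <= j)%nat -> scale i <= scale j.
Proof.
  intro hij. destruct (Nat.eq_dec i j) as [->|ne]; [lra|].
  left; apply scale_lt; lia.
Qed.

Lemma scale_ge_index (n : nat) : INR n <= scale n.
Proof.
  induction n as [|n IH]; [simpl; pose proof (scale_succ 0); lra|].
  rewrite S_INR. pose proof (scale_succ n); lra.
Qed.

End Scale.

Lemma Nsum_ge (N : nat -> nat) :
  (forall k, (1 <= k)%nat -> (1 <= N k)%nat) -> forall K, (K <= Nsum N K)%nat.
Proof. intros H K; induction K as [|K IH]; simpl; [lia | specialize (H (S K)); lia]. Qed.

Section SlowOrbit.
Variables (F g : R -> R) (N : nat -> nat).
Hypothesis F_nonpos : forall y, y <= 0 -> F y <= 0 /\ - F y <= g (- y).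
Hypothesis g_mono : forall s r, 0 <= s <= r -> g s <= g r.
Hypothesis g_cube : forall r, 0 <= r -> r ^ 3 <= g r.
Hypothesis hN : forall k, (1 <= k)%nat -> (1 <= N k)%nat.
Hypothesis hstage : forall j, (1 <= j)%nat -> forall y,
  - scale g (Nsum N (j - 1) + 2 * j) < y <= 0 -> - scale g (Nsum N j) < iterf (N j) F y.

(* One block: starting below r_(S_(j-1)), one step of F stays below
   g(r_(S_(j-1))) = r_(S_(j-1)+1) < r_(S_(j-1)+2j), and the next N_j steps
   bring the orbit below r_(S_j). *)
Lemma stage_step (j : nat) (y : R) : (1 <= j)%nat -> y <= 0 ->
  - y <= scale g (Nsum N (j - 1)) -> - iterf (N j) F (F y) < scale g (Nsum N j).
Proof.
  intros hj hy hbound. destruct (F_nonpos y hy) as [HFy HgFy].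
  assert (- F y < scale g (Nsum N (j - 1) + 2 * j)).
  { pose proof (g_mono (- y) (scale g (Nsum N (j - 1))) ltac:(lra)).
    pose proof (scale_lt g g_cube (S (Nsum N (j - 1))) (Nsum N (j - 1) + 2 * j) ltac:(lia)).
    change (scale g (S (Nsum N (j - 1)))) with (g (scale g (Nsum N (j - 1)))) in *. lra. }
  assert (- scale g (Nsum N j) < iterf (N j) F (F y)) by (apply hstage; auto; lra).
  lra.
Qed.

(* After q further blocks, started below r_(S_K), the orbit at time T lies
   below r_(S_(K+q)), where the index lags behind T by the fixed amount S_K - q. *)
Lemma orbit_invariant (x : R) (K : nat) : x <= 0 -> - x <= scale g (Nsum N K) ->
  forall q, exists T, (T + Nsum N K = Nsum N (K + q) + q)%nat /\
                      - iterf T F x <= scale g (Nsum N (K + q)).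
Proof.
  intros hx hK q. induction q as [|q [T [eT bT]]].
  - exists O. rewrite !Nat.add_0_r. split; [lia | exact hK].
  - exists (N (S (K + q)) + S T)%nat.
    replace (K + S q)%nat with (S (K + q)) by lia. simpl Nsum. split; [lia|].
    rewrite iterf_add. left. apply stage_step; [lia | | ].
    + apply iterf_nonpos; auto. intros y hy; apply F_nonpos, hy.
    + replace (S (K + q) - 1)%nat with (K + q)%nat by lia. exact bT.
Qed.

(* Consequently the orbit lies below every shifted scale r_(T-d) at some time
   T >= d (choose K >= -x and q = d + S_K + 1 blocks). *)
Lemma orbit_slow (x : R) (d : nat) : x <= 0 ->
  exists T, (d <= T)%nat /\ - iterf T F x < scale g (T - d).
Proof.
  intro hx. destruct (INR_unbounded (- x)) as [K HK].
  assert (hK : - x <= scale g (Nsum N K)).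
  { pose proof (scale_ge_index g g_cube K).
    pose proof (scale_le g g_cube K (Nsum N K) (Nsum_ge N hN K)). lra. }
  destruct (orbit_invariant x K hx hK (d + Nsum N K + 1)) as [T [eT bT]].
  exists T. split; [lia|].
  eapply Rle_lt_trans; [exact bT | apply scale_lt; [exact g_cube | lia]].
Qed.

End SlowOrbit.

Section FastGrowth.
Variables (M g : R -> R) (R0 : R).
Hypothesis hR0 : 0 < R0.
Hypothesis hMR : forall r, R0 <= r -> r < M r.
Hypothesis M_homog : forall s r, 0 <= s <= r -> r * M s <= s * M r.
Hypothesis g_le_M : forall r, 0 <= r -> g r <= M r.
Hypothesis g_mono : forall s r, 0 <= s <= r -> g s <= g r.
Hypothesis g_cube : forall r, 0 <= r -> r ^ 3 <= g r.

Lemma growth_ratio_gt1 : 1 < M R0 / R0.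
Proof.
  apply (Rmult_lt_reg_r R0); [exact hR0|].
  unfold Rdiv. rewrite Rmult_assoc, Rinv_l, Rmult_1_r, Rmult_1_l by lra. apply hMR; lra.
Qed.

(* M(v) >= c v with c = M(R0)/R0 > 1, so M^n(R0) grows geometrically. *)
Lemma M_iter_geometric (n : nat) : R0 * (M R0 / R0) ^ n <= iterf n M R0.
Proof.
  pose proof growth_ratio_gt1 as hc. set (c := M R0 / R0) in *.
  induction n as [|n IH]; [simpl; lra|].
  set (v := iterf n M R0) in *.
  assert (hv : R0 <= v) by (pose proof (pow_R1_Rle c n ltac:(lra)); nra).
  assert (v * c <= M v).
  { pose proof (M_homog R0 v ltac:(lra)) as H.
    apply (Rmult_le_reg_l R0); [exact hR0|]. unfold c, Rdiv.
    replace (R0 * (v * (M R0 * / R0))) with (v * M R0) by (field; lra). exact H. }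
  simpl. fold v. nra.
Qed.

Lemma M_iter_reaches : exists l, 10 <= iterf l M R0.
Proof.
  pose proof growth_ratio_gt1 as hc1.
  assert (hc : Rabs (M R0 / R0) > 1) by (rewrite Rabs_pos_eq; lra).
  destruct (Pow_x_infinity _ hc (10 / R0)) as [l Hl]. exists l.
  specialize (Hl l (le_n l)). rewrite Rabs_pos_eq in Hl by (apply pow_le; lra).
  pose proof (M_iter_geometric l).
  assert (R0 * (10 / R0) <= R0 * (M R0 / R0) ^ l) by (apply Rmult_le_compat_l; lra).
  replace (R0 * (10 / R0)) with 10 in * by (field; lra). lra.
Qed.

Lemma M_iter_dominates : exists l, forall n, scale g n <= iterf (l + n) M R0.
Proof.
  destruct M_iter_reaches as [l hl]. exists l. intro n.
  induction n as [|n IH]; [rewrite Nat.add_0_r; exact hl|].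
  rewrite Nat.add_succ_r. pose proof (scale_succ g g_cube n) as [h10 _].
  change (scale g (S n)) with (g (scale g n)). simpl.
  pose proof (g_mono (scale g n) (iterf (l + n) M R0) ltac:(lra)).
  pose proof (g_le_M (iterf (l + n) M R0) ltac:(lra)). lra.
Qed.

Lemma orbit_fast (w : nat -> R) (m : nat) :
  (forall n, (1 <= n)%nat -> iterf n M R0 <= w (n + m)%nat) ->
  exists d, forall T, (d <= T)%nat -> scale g (T - d) <= w T.
Proof.
  intro Hw. destruct M_iter_dominates as [l Hl]. exists (m + l + 1)%nat.
  intros T hT.
  pose proof (scale_le g g_cube (T - (m + l + 1)) (T - m - l) ltac:(lia)).
  pose proof (Hl (T - m - l)%nat). pose proof (Hw (T - m)%nat ltac:(lia)).
  replace (l + (T - m - l))%nat with (T - m)%nat in * by lia.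
  replace (T - m + m)%nat with T in * by lia. lra.
Qed.

End FastGrowth.

(* A point x <= 0 of A(f) would have an orbit eventually above a shifted scale
   r_(T-d) (fast growth of M^n(R0)), whereas every real orbit in (-oo, 0]
   lies below r_(T-d) at some time T >= d (slow orbits). *)
Theorem lemma3p1
  (a : nat -> R) (p : nat -> nat) (f : Cx -> Cx) (g : R -> R) (M : R -> R)
  (N : nat -> nat)
  (ha_pos : forall n, 0 < a n)
  (ha_inc : forall n, a n < a (S n))
  (hp : forall n, (1 <= p n)%nat)
  (hf : forall z, Ccv (fun K => fpart a p K z) (f z))
  (hg : forall r, 0 <= r -> Un_cv (fun K => gpart a p K r) (g r))
  (hM : is_max_modulus f M)
  (hN : forall k, (1 <= k)%nat -> (1 <= N k)%nat)
  (h1 : maps_into f (N 1%nat) (iterf 2 g 10) (iterf (N 1%nat) g 10))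
  (hk : forall k, (2 <= k)%nat ->
          maps_into f (N k) (iterf (Nsum N (k - 1) + 2 * k) g 10)
                            (iterf (Nsum N k) g 10)) :
  forall R0, 0 < R0 -> (forall r, R0 <= r -> r < M r) ->
  forall x, x <= 0 -> ~ in_A f M R0 (RtoC x).
Proof.
  intros R0 hR0 hMR x hx [m [_ HA]].
  pose proof (freal_nonpos a p f g ha_pos ha_inc hf hg) as F_nonpos.
  pose proof (g_nondecreasing a p g ha_pos ha_inc hg) as g_mono.
  pose proof (g_ge_cube a p g ha_pos ha_inc hg) as g_cube.
  assert (hstage : forall j, (1 <= j)%nat -> forall y,
            - scale g (Nsum N (j - 1) + 2 * j) < y <= 0 ->
            - scale g (Nsum N j) < iterf (N j) (freal f) y).
  { intros j hj. apply (maps_into_real a p f hf).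
    destruct j as [|[|j]]; [lia | exact h1 | apply hk; lia]. }
  destruct (orbit_fast M g R0 hR0 hMR
              (max_modulus_ratio_mono a p f M ha_pos hf hM)
              (g_le_max_modulus a p f g M ha_pos ha_inc hf hg hM) g_mono g_cube
              (fun T => - iterf T (freal f) x) m) as [d Hd].
  { intros n hn. specialize (HA n hn).
    rewrite <- iterf_add, (orbit_modulus a p f g ha_pos ha_inc hf hg) in HA by exact hx.
    lra. }
  destruct (orbit_slow (freal f) g N F_nonpos g_mono g_cube hN hstage x d hx)
    as [T [hT Hslow]].
  specialize (Hd T hT). cbv beta in Hd. lra.
Qed.
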